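(* For integers $d\geq 2$ and $1\leq k\leq d$, $\gamma_{gr}^{L,k}(Q_d)\geq\lceil 2^d-2^{d-(k+1)}\rceil$.
   Context: $Q_d$ is the $d$-dimensional hypercube: vertices are the $0$-$1$ strings of length $d$, adjacent iff they differ in exactly one position. For a vertex $v$, $N(v)$ is its open neighborhood and $N[v]=N(v)\cup\{v\}$. A sequence $S=(v_1,\ldots,v_m)$ of distinct vertices is a $k$-$L$-sequence if for each $i$ there is $u_i\in N[v_i]$ such that the number of indices $j<i$ with $u_i\in N(v_j)$ is less than $k$. $\gamma_{gr}^{L,k}(G)$ is the maximum length of a $k$-$L$-sequence of $G$. *)

From mathcomp Require Import all_boot all_order all_algebra.
Set Implicit Arguments. Unset Strict Implicit. Unset Printing Implicit Defensive.
Import Order.TTheory GRing.Theory Num.Theory.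

Definition hvert (d : nat) := {ffun 'I_d -> bool}.

Definition hadj (d : nat) (u v : hvert d) : bool :=
  #|[set i : 'I_d | u i != v i]| == 1%N.

Definition hcadj (d : nat) (u v : hvert d) : bool := (u == v) || hadj u v.

(* S = (v_1,...,v_m) is a k-L-sequence: distinct vertices and for each i there is
   u_i in N[v_i] such that #{ j < i | u_i \in N(v_j) } < k. *)
Definition is_kL_seq (d k : nat) (s : seq (hvert d)) : bool :=
  uniq s &&
  [forall i : 'I_(size s),
     [exists u : hvert d,
        hcadj u (nth u s i) &&
        (count (fun w => hadj u w) (take i s) < k)%N]].

From mathcomp Require Import all_boot all_order all_algebra zify.
Import Order.TTheory GRing.Theory Num.Theory.
Set Implicit Arguments. Unset Strict Implicit. Unset Printing Implicit Defensive.

(* Fix c = d - k and call the k - 1 coordinates i > c high, the others low.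
   List the vertices by increasing weight 2 * (number of high ones) + (parity
   of the low bits), and guard each v by u in N[v]: v with a high zero turned
   into a one if there is one, otherwise v with bit c flipped if the low parity
   is odd, and v itself if it is even.  A neighbour of u across a low
   coordinate then either has larger weight, or is v itself, or (in the middle
   case) is exceptional: all high bits and bit c set, odd low parity.  Dropping
   the exceptional vertices, every earlier neighbour of a guard differs from it
   in a high coordinate, so there are fewer than k of them.  Flipping bit 0
   injects the exceptional vertices into the other vertices among the 2^c with
   all high bits and bit c set, so there are at most 2^(c-1) of them (none if
   c = 0), which leaves at least 2^d - 2^(d-k-1) vertices. *)

Definition flip d (v : hvert d) (b : 'I_d) : hvert d :=
  [ffun i => if i == b then ~~ v i else v i].

Lemma flipE d (v : hvert d) b i : flip v b i = if i == b then ~~ v i else v i.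
Proof. by rewrite ffunE. Qed.

Lemma flipK d (b : 'I_d) : involutive (fun v : hvert d => flip v b).
Proof.
by move=> v; apply/ffunP=> i; rewrite !flipE; case: eqP => // _; rewrite negbK.
Qed.

Lemma hadj_flip d (v : hvert d) b : hadj (flip v b) v.
Proof.
rewrite /hadj (_ : [set i | flip v b i != v i] = [set b]) ?cards1 //.
apply/setP=> i; rewrite !inE flipE.
by case: (i =P b) => [->|_]; [case: (v b)|rewrite eqxx].
Qed.

Lemma hadjP d (u x : hvert d) : hadj u x -> exists b, x = flip u b.
Proof.
move=> /cards1P [b Hb]; exists b; apply/ffunP => i.
have := congr1 (fun A : {set 'I_d} => i \in A) Hb; rewrite /= !inE flipE.
by case: (i =P b) => [->|_]; case: (u _); case: (x _).
Qed.

Lemma card_hvert d : #|hvert d| = 2 ^ d.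
Proof. by rewrite card_ffun card_bool card_ord. Qed.

Lemma count_hadj_le d (u : hvert d) (t : seq (hvert d)) (B : {set 'I_d}) :
  uniq t -> (forall x, x \in t -> hadj u x -> exists2 b, b \in B & x = flip u b) ->
  count (hadj u) t <= #|B|.
Proof.
move=> Ut nbB; rewrite -size_filter cardE -(size_map (flip u)).
apply: uniq_leq_size; first exact: filter_uniq.
move=> x; rewrite mem_filter => /andP [ux xt].
by have [b bB ->] := nbB x xt ux; rewrite map_f ?mem_enum.
Qed.

Lemma sum_flip_notin d (Q : pred 'I_d) (v : hvert d) b : ~~ Q b ->
  \sum_(i | Q i) flip v b i = \sum_(i | Q i) v i.
Proof.
move=> Qb; apply: eq_bigr => i Qi; rewrite flipE.
by case: eqP => // ib; move: Qb; rewrite -ib Qi.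
Qed.

Lemma sum_flip_in d (Q : pred 'I_d) (v : hvert d) b : Q b ->
  \sum_(i | Q i) flip v b i + v b = \sum_(i | Q i) v i + ~~ v b.
Proof.
move=> Qb; rewrite !(bigD1 b Qb) /= flipE eqxx.
rewrite (eq_bigr (fun i : 'I_d => (v i : nat))) => [|i /andP [_ /negbTE ib]]; first lia.
by rewrite flipE ib.
Qed.

Section RankSort.

Variables (d : nat) (P : {pred hvert d}) (r : hvert d -> nat).
Variables (guard : hvert d -> hvert d) (B : {set 'I_d}).
Hypothesis guard_adj : forall v, hcadj (guard v) v.
Hypothesis flip_guard_later : forall v b,
  v \in P -> flip (guard v) b \in P -> flip (guard v) b != v -> b \notin B ->
  r v < r (flip (guard v) b).

Definition rank_sort : seq (hvert d) := sort (relpre r leq) (enum P).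

Lemma size_rank_sort : size rank_sort = #|P|.
Proof. by rewrite size_sort cardE. Qed.

Lemma rank_sort_kL k : #|B| < k -> is_kL_seq k rank_sort.
Proof.
move=> Bk; set s := rank_sort.
have Us : uniq s by rewrite sort_uniq enum_uniq.
have Ps x : x \in s -> x \in P by rewrite mem_sort mem_enum.
have Ss : sorted (relpre r leq) s by apply: sort_sorted => x y; apply: leq_total.
rewrite /is_kL_seq Us; apply/forallP => i; apply/existsP.
pose v0 : hvert d := [ffun=> false]; pose v := nth v0 s i.
exists (guard v); rewrite (set_nth_default v0) ?ltn_ord // guard_adj /=.
have vs : v \in s by apply: mem_nth.
apply: leq_ltn_trans Bk; apply: count_hadj_le; first exact: take_uniq.
move=> x xt /hadjP [b xE]; exists b => //; apply: contraT => bB.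
have [j ji xj] : exists2 j, j < i & nth v0 s j = x.
  move/(nthP v0): (xt) => [j]; rewrite size_take ltn_ord => ji.
  by rewrite nth_take //; exists j.
move: xt xE; rewrite -xj => xt xE.
have js : j < size s by apply: ltn_trans ji _.
have xv : nth v0 s j != v by rewrite nth_uniq // (ltn_eqF ji).
have rxv : r (nth v0 s j) <= r v.
  have r_trans : transitive (relpre r leq) by move=> ? ? ?; apply: leq_trans.
  by apply: (sorted_leq_nth r_trans (fun y => leqnn (r y))) => //; rewrite ?inE // ltnW.
have := flip_guard_later (Ps v vs) _ _ bB; rewrite -xE Ps ?(mem_take xt) // xv.
by rewrite ltnNge rxv => /(_ isT isT).
Qed.

End RankSort.

Section LowHighSplit.

Variables (d : nat) (c : 'I_d).

Definition high_ones (v : hvert d) : nat := \sum_(i < d | c < i) v i.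
Definition low_parity (v : hvert d) : bool := odd (\sum_(i < d | i <= c) v i).
Definition weight (v : hvert d) : nat := (high_ones v).*2 + low_parity v.
Definition high_full (v : hvert d) : bool := [forall i : 'I_d, (c < i) ==> v i].
Definition exceptional (v : hvert d) : bool :=
  [&& 0 < c, high_full v, v c & low_parity v].

Definition guard (v : hvert d) : hvert d :=
  match [pick z : 'I_d | (c < z) && ~~ v z] with
  | Some z => flip v z
  | None => if low_parity v then flip v c else v
  end.

Lemma low_parity_flip_low (v : hvert d) (b : 'I_d) :
  b <= c -> low_parity (flip v b) = ~~ low_parity v.
Proof.
move=> bc; have := congr1 odd (sum_flip_in v (Q := fun i : 'I_d => i <= c) bc).
by rewrite /low_parity !oddD; case: (v b) => /=; case: (odd _); case: (odd _).
Qed.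

Lemma high_ones_flip_low (v : hvert d) (b : 'I_d) :
  b <= c -> high_ones (flip v b) = high_ones v.
Proof. by move=> bc; rewrite /high_ones sum_flip_notin // -leqNgt. Qed.

Lemma high_ones_flip_high (v : hvert d) (b : 'I_d) :
  c < b -> ~~ v b -> high_ones (flip v b) = (high_ones v).+1.
Proof.
move=> cb /negbTE vb; have := sum_flip_in v (Q := fun i : 'I_d => c < i) cb.
by rewrite /high_ones vb addn0 addn1.
Qed.

Lemma high_full_flip_low (v : hvert d) (b : 'I_d) :
  b <= c -> high_full (flip v b) = high_full v.
Proof.
move=> bc; apply: eq_forallb => i; rewrite flipE.
by case: (i =P b) => // ->; rewrite ltnNge bc.
Qed.

Lemma guard_adj (v : hvert d) : hcadj (guard v) v.
Proof.
rewrite /guard /hcadj; case: pickP => [z _|_]; first by rewrite hadj_flip orbT.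
by case: (low_parity v); rewrite ?hadj_flip ?orbT ?eqxx.
Qed.

Lemma flip_guard_later (v : hvert d) (b : 'I_d) :
  v \in ~: [set w | exceptional w] ->
  flip (guard v) b \in ~: [set w | exceptional w] ->
  flip (guard v) b != v -> b \notin [set i : 'I_d | c < i] ->
  weight v < weight (flip (guard v) b).
Proof.
rewrite !inE -leqNgt => exv exx xv bc; move: exx xv; rewrite /guard.
case: pickP => [z /andP [cz vz] _ _ | no_high_zero].
  by rewrite /weight high_ones_flip_low // high_ones_flip_high // doubleS; lia.
have full_v : high_full v.
  apply/forallP => i; apply/implyP => ci.
  by have := no_high_zero i; rewrite ci; case: (v i).
case pv: (low_parity v); last first.
  by rewrite /weight high_ones_flip_low // low_parity_flip_low // pv; lia.
have [->|bnc] := eqVneq b c; first by rewrite flipK eqxx.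
have c0 : 0 < c by move: bnc bc; rewrite -val_eqE /=; lia.
have vc : v c = false by move: exv; rewrite /exceptional c0 full_v pv andbT => /negbTE.
rewrite /exceptional c0 !high_full_flip_low // full_v !low_parity_flip_low // pv /=.
by rewrite !flipE eqxx eq_sym (negbTE bnc) vc.
Qed.

Lemma card_high_le : #|[set i : 'I_d | c < i]| <= d - c.+1.
Proof.
rewrite cardsCs card_ord leq_sub2l //.
have le_c1d : c.+1 <= d := ltn_ord c.
have widen_inj : injective (widen_ord le_c1d).
  by move=> i j /(congr1 val) ij; apply: val_inj.
have low_image : [set widen_ord le_c1d j | j in 'I_c.+1] \subset ~: [set i : 'I_d | c < i].
  by apply/subsetP => _ /imsetP [j _ ->]; rewrite !inE -leqNgt; exact: ltn_ord j.
by have := subset_leq_card low_image; rewrite card_imset // card_ord.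
Qed.

Lemma card_high_full_le : #|[set v : hvert d | high_full v && v c]| <= 2 ^ c.
Proof.
have le_cd : c <= d := ltnW (ltn_ord c).
pose low (v : hvert d) : {ffun 'I_c -> bool} := [ffun i => v (widen_ord le_cd i)].
have low_inj : {in [set v : hvert d | high_full v && v c] &, injective low}.
  move=> v w; rewrite !inE => /andP [fv vc] /andP [fw wc] /ffunP low_vw.
  apply/ffunP => i; case: (ltngtP i c) => [ic | ci | /val_inj ->].
  - have -> : i = widen_ord le_cd (Ordinal ic) by apply: val_inj.
    by have := low_vw (Ordinal ic); rewrite !ffunE.
  - by move: (forallP fv i) (forallP fw i); rewrite ci /= => -> ->.
  - by rewrite vc wc.
rewrite -(card_in_imset low_inj); apply: leq_trans (max_card _) _.
by rewrite card_ffun card_bool card_ord.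
Qed.

Lemma card_exceptional : #|[set v : hvert d | exceptional v]|.*2 <= 2 ^ c.
Proof.
set E := [set v | exceptional v]; set S := [set v : hvert d | high_full v && v c].
have [c0 | c_gt0] := posnP c.
  by rewrite (_ : E = set0) ?cards0 //; apply/setP => v; rewrite !inE /exceptional c0.
pose b0 : 'I_d := Ordinal (ltn_trans c_gt0 (ltn_ord c)).
have ES : E \subset S.
  by apply/subsetP => v; rewrite !inE => /and4P [_ -> -> _].
have flipES : [set flip v b0 | v in E] \subset S :\: E.
  apply/subsetP => _ /imsetP [v + ->]; rewrite !inE => /and4P [_ fv vc pv].
  rewrite /exceptional high_full_flip_low // low_parity_flip_low // pv fv !andbF /=.
  by rewrite flipE -val_eqE /= (gtn_eqF c_gt0) vc.
have := subset_leq_card flipES; rewrite card_imset; last exact: can_inj (flipK b0).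
have := subset_leq_card ES; rewrite cardsDS // -addnn => hES hflip.
have := card_high_full_le; rewrite -/S; lia.
Qed.

End LowHighSplit.

Local Open Scope ring_scope.

Lemma ceil_pow2_sub_le (n m e : nat) : (e.*2 <= 2 ^ m)%N -> (m <= n)%N ->
  Num.ceil ((2 : rat) ^+ n - 2 ^ (m%:Z - 1)) <= (2 ^ n - e)%N%:Z.
Proof.
move=> em mn; have en : (e <= 2 ^ n)%N.
  by rewrite (leq_trans (leq_addr e e)) // addnn (leq_trans em) // leq_pexp2l.
rewrite ceil_le_int -pmulrn natrB // natrX lerD2l lerN2.
have half_pow : (2 : rat) ^ (m%:Z - 1) * 2 = (2 ^ m)%:R.
  by rewrite -[X in _ * X]expr1z -exprzDr ?unitfE // subrK -exprnP natrX.
by rewrite -(ler_pM2r (_ : 0 < 2)) // half_pow -natrM muln2 ler_nat.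
Qed.

Theorem mainTheorem9 (d k : nat) (hd : (2 <= d)%N) (hk1 : (1 <= k)%N) (hkd : (k <= d)%N) :
  exists s : seq (hvert d), is_kL_seq k s /\
    Num.ceil ((2 : rat) ^+ d - (2 : rat) ^ (d%:Z - (k%:Z + 1))) <= (size s)%:Z.
Proof.
have c_lt_d : (d - k < d)%N by lia.
pose c := Ordinal c_lt_d.
pose E := [set v : hvert d | exceptional c v].
exists (rank_sort (~: E) (weight c)); split.
  apply: (rank_sort_kL (guard_adj c) (@flip_guard_later _ c)).
  by apply: leq_ltn_trans (card_high_le c) _ => /=; lia.
have -> : d%:Z - (k%:Z + 1) = (d - k)%N%:Z - 1 by lia.
rewrite size_rank_sort cardsCs setCK card_hvert.
by apply: ceil_pow2_sub_le (card_exceptional c) _; rewrite leq_subr.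
Qed.
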